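(* Let $f:\mathbb{R}^n \to \mathbb{R}$ be strongly convex and piecewise linear-quadratic, with a fixed representation by polyhedral sets $F_1,\dots,F_p$ as described in the context, and let $C \subset \mathbb{R}^n$ be a nonempty closed convex set such that for every $x \in \mathbb{R}^n$ with $F_x \cap C \neq \emptyset$ the collection $\{F_x,C\}$ is boundedly linearly regular. Then for every $R>0$ there exists $L>0$ such that for all $x \in B_R$ and all $x^* \in \partial f(x)$, \[ \operatorname{dist}_f^{x^*}(x,C)^2 \le L \cdot \operatorname{dist}(x, C)^2 . \]
   Context: $f$ is strongly convex if there is $\alpha>0$ with $f(y)\ge f(x)+\langle x^*,y-x\rangle+\frac{\alpha}{2}\|y-x\|_2^2$ for all $x,y\in\mathbb{R}^n$, $x^*\in\partial f(x)$. A convex $f:\mathbb{R}^n\to\mathbb{R}$ is piecewise linear-quadratic if there are finitely many polyhedral sets $F_i\subset\mathbb{R}^n$, $i\in I=\{1,\dots,p\}$, whose union is $\mathbb{R}^n$, such that on each $F_i$, $f(x)=\frac12\langle x,A_ix\rangle+\langle a_i,x\rangle+\alpha_i$ with symmetric positive semidefinite $A_i$, $a_i\in\mathbb{R}^n$, $\alpha_i\in\mathbb{R}$. For $x\in\mathbb{R}^n$ set $I_f(x)=\{i: x\in F_i\}$ and $F_x=\bigcap_{i\in I_f(x)}F_i$. $B_R=\{x:\|x\|_2\le R\}$. A collection of closed convex sets $C_1,\dots,C_r$ with nonempty intersection $D=\bigcap_i C_i$ is boundedly linearly regular if for every $R>0$ there is $\gamma>0$ with $\operatorname{dist}(x,D)^2\le\gamma\sum_{i=1}^r\operatorname{dist}(x,C_i)^2$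 for all $x\in B_R$ ($\operatorname{dist}$ = Euclidean distance). For $x^*\in\partial f(x)$, $D_f^{x^*}(x,y)=f(y)-f(x)-\langle x^*,y-x\rangle$ and $\operatorname{dist}_f^{x^*}(x,C)^2:=\min_{y\in C}D_f^{x^*}(x,y)$. *)

From HB Require Import structures.
From mathcomp Require Import all_boot all_order all_algebra.
From mathcomp Require Import all_classical all_reals all_analysis.
Set Implicit Arguments. Unset Strict Implicit. Unset Printing Implicit Defensive.
Import Order.TTheory GRing.Theory Num.Theory.
Import numFieldNormedType.Exports.
Local Open Scope classical_set_scope.
Local Open Scope ring_scope.

Section Defs.
Variables (R : realType) (n : nat).
Notation vec := 'cV[R]_n.

Definition P_ip (x y : vec) : R := \sum_(i < n) x i 0 * y i 0.
Definition P_norm2 (x : vec) : R := Num.sqrt (P_ip x x).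

Definition P_eball_R (r : R) : set vec := [set x | P_norm2 x <= r].

Definition P_edist (x : vec) (C : set vec) : R := inf [set P_norm2 (x - y) | y in C].

Definition P_convex_set (S : set vec) : Prop :=
  forall x y (t : R), S x -> S y -> 0 <= t <= 1 -> S (t *: x + (1 - t) *: y).

Definition P_convex_fun (f : vec -> R) : Prop :=
  forall x y (t : R), 0 <= t <= 1 ->
    f (t *: x + (1 - t) *: y) <= t * f x + (1 - t) * f y.

Definition P_subgrad (f : vec -> R) (x xs : vec) : Prop :=
  forall y, f x + P_ip xs (y - x) <= f y.

Definition P_strongly_convex (f : vec -> R) : Prop :=
  exists2 alpha : R, 0 < alpha & forall x y xs, P_subgrad f x xs ->
    f x + P_ip xs (y - x) + alpha / 2 * (P_norm2 (y - x)) ^+ 2 <= f y.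

Definition P_polyhedral (P : set vec) : Prop :=
  exists m (a : 'I_m -> vec) (b : 'I_m -> R),
    P = [set x | forall j, P_ip (a j) x <= b j].

Definition P_symmetric_psd (A : 'M[R]_n) : Prop :=
  A^T = A /\ forall x : vec, 0 <= P_ip x (A *m x).

Definition P_plq_rep (f : vec -> R) (p : nat) (F : 'I_p -> set vec)
  (A : 'I_p -> 'M[R]_n) (a : 'I_p -> vec) (al : 'I_p -> R) : Prop :=
  (forall i, P_polyhedral (F i)) /\
  (\bigcup_(i in [set: 'I_p]) F i = [set: vec]) /\
  (forall i, P_symmetric_psd (A i)) /\
  (forall i x, F i x -> f x = 1 / 2 * P_ip x (A i *m x) + P_ip (a i) x + al i).

Definition P_Fx (p : nat) (F : 'I_p -> set vec) (x : vec) : set vec :=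
  [set y | forall i, F i x -> F i y].

Definition P_bdd_lin_regular (r : nat) (Cs : 'I_r -> set vec) : Prop :=
  (forall i, closed (Cs i) /\ P_convex_set (Cs i)) /\
  (\bigcap_(i in [set: 'I_r]) Cs i !=set0) /\
  forall rad : R, 0 < rad -> exists2 g : R, 0 < g & forall x, P_eball_R rad x ->
    P_edist x (\bigcap_(i in [set: 'I_r]) Cs i) ^+ 2
      <= g * \sum_(i < r) P_edist x (Cs i) ^+ 2.

Definition P_pair_sets (C1 C2 : set vec) : 'I_2 -> set vec :=
  fun i => if val i == 0%N then C1 else C2.

(* Bregman distance and dist_f^{x*}(x,C)^2 := min_{y in C} D_f^{x*}(x,y) *)
Definition P_bregman (f : vec -> R) (xs x y : vec) : R := f y - f x - P_ip xs (y - x).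
Definition P_bregman_dist2 (f : vec -> R) (xs x : vec) (C : set vec) : R :=
  inf [set P_bregman f xs x y | y in C].

End Defs.

From HB Require Import structures.
From mathcomp Require Import all_boot all_order all_algebra.
From mathcomp Require Import all_classical all_reals all_analysis.
From mathcomp Require Import ring lra.
Set Implicit Arguments. Unset Strict Implicit. Unset Printing Implicit Defensive.
Import Order.TTheory GRing.Theory Num.Theory.
Import numFieldNormedType.Exports.
Local Open Scope classical_set_scope.
Local Open Scope ring_scope.

(* The sets F_x take only finitely many values, one for each index set
   {i | x \in F_i}, so it suffices to find a constant for the points x of a
   fixed F_x = K.  Two ingredients do the work.
   - Locally f is quadratic along F_x: for y \in F_x, some piece F_j contains
   x, y and a point slightly behind x on the line through x and y, so the
   subgradient inequality at that point controls the Bregman distance: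
   D_f^{x*}(x,y) <= M |y - x|^2.
   - If K meets C, bounded linear regularity of {K, C} gives y \in K \cap C
   with |x - y|^2 <= 4 dist(x, K \cap C)^2 <= 4 g dist(x, C)^2 for x \in K.
   If K misses C, compactness of K \cap B_R gives dist(x, C) >= delta > 0 on
   it, while the Bregman distance to a near-closest point of C is bounded on
   bounded sets. *)

Section InnerProduct.
Variables (R : realType) (n : nat).
Local Notation vec := 'cV[R]_n.
Implicit Types (u v w d z : vec).

Lemma P_ipDl u v w : P_ip (u + v) w = P_ip u w + P_ip v w.
Proof. by rewrite /P_ip -big_split; apply: eq_bigr => i _; rewrite mxE mulrDl. Qed.

Lemma P_ipZl s u w : P_ip (s *: u) w = s * P_ip u w.
Proof. by rewrite /P_ip mulr_sumr; apply: eq_bigr => i _; rewrite mxE mulrA. Qed.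

Lemma P_ipC u v : P_ip u v = P_ip v u.
Proof. by apply: eq_bigr => i _; rewrite mulrC. Qed.

Lemma P_ipNl u w : P_ip (- u) w = - P_ip u w.
Proof. by rewrite -scaleN1r P_ipZl mulN1r. Qed.

Lemma P_ipDr u v w : P_ip w (u + v) = P_ip w u + P_ip w v.
Proof. by rewrite P_ipC P_ipDl ![P_ip _ w]P_ipC. Qed.

Lemma P_ipZr s u w : P_ip w (s *: u) = s * P_ip w u.
Proof. by rewrite P_ipC P_ipZl P_ipC. Qed.

Lemma P_ipNr u w : P_ip w (- u) = - P_ip w u.
Proof. by rewrite P_ipC P_ipNl P_ipC. Qed.

Lemma P_ip0r u : P_ip u 0 = 0.
Proof. by rewrite -(scale0r 0) P_ipZr mul0r. Qed.

Lemma P_ip_ge0 v : 0 <= P_ip v v.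
Proof. by apply: sumr_ge0 => i _; rewrite -expr2 sqr_ge0. Qed.

Lemma P_norm2_ge0 v : 0 <= P_norm2 v.
Proof. exact: sqrtr_ge0. Qed.

Lemma P_norm2N v : P_norm2 (- v) = P_norm2 v.
Proof. by rewrite /P_norm2 P_ipNl P_ipNr opprK. Qed.

Lemma P_norm2_0 : P_norm2 (0 : vec) = 0.
Proof. by rewrite /P_norm2 P_ip0r sqrtr0. Qed.

Lemma coord_le_P_norm2 v i : `|v i 0| <= P_norm2 v.
Proof.
rewrite -sqrtr_sqr /P_norm2 ler_sqrt ?P_ip_ge0 // /P_ip (bigD1 i) //= expr2.
by rewrite lerDl sumr_ge0 // => j _; rewrite -expr2 sqr_ge0.
Qed.

Lemma P_norm2_le_sum_coord v : P_norm2 v <= \sum_k `|v k 0|.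
Proof.
have S0 : 0 <= \sum_k `|v k 0| by apply: sumr_ge0.
rewrite -(ger0_norm S0) -sqrtr_sqr /P_norm2 ler_sqrt ?sqr_ge0 // expr2.
rewrite /P_ip mulr_suml; apply: ler_sum => k _.
rewrite (le_trans (ler_norm _)) // normrM ler_wpM2l //.
by rewrite (bigD1 k) //= lerDl sumr_ge0.
Qed.

Lemma coord_le_mx_norm v i : `|v i 0| <= `|v|.
Proof.
rewrite [leRHS]mx_normrE.
exact: (le_bigmax _ (fun ij : 'I_n * 'I_1 => `|v ij.1 ij.2|) (i, 0)).
Qed.

Lemma mx_norm_le_P_norm2 v : `|v| <= P_norm2 v.
Proof.
rewrite [leLHS]mx_normrE; apply: bigmax_le => [|[i j] _]; first exact: P_norm2_ge0.
by rewrite /= (ord1 j) coord_le_P_norm2.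
Qed.

Lemma abs_P_ip_le (a : vec) z r : (forall k, `|z k 0| <= r) ->
  `|P_ip a z| <= (\sum_k `|a k 0|) * r.
Proof.
move=> zr; rewrite /P_ip (le_trans (ler_norm_sum _ _ _)) // mulr_suml.
by apply: ler_sum => i _; rewrite normrM ler_wpM2l.
Qed.

Lemma abs_P_ip_quad_le (A : 'M[R]_n) d r : 0 <= r -> (forall k, `|d k 0| <= r) ->
  `|P_ip d (A *m d)| <= (\sum_i \sum_k `|A i k|) * r ^+ 2.
Proof.
move=> r0 dr; rewrite /P_ip (le_trans (ler_norm_sum _ _ _)) // mulr_suml.
apply: ler_sum => i _; rewrite normrM mxE expr2 mulrCA ler_pM //.
rewrite mulr_suml (le_trans (ler_norm_sum _ _ _)) //; apply: ler_sum => k _.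
by rewrite normrM ler_wpM2l.
Qed.

End InnerProduct.

Section Polyhedra.
Variables (R : realType) (n : nat).
Local Notation vec := 'cV[R]_n.

Lemma lipschitz_continuous_fun (g : vec -> R) (c : R) : 0 <= c ->
  (forall v w, `|g v - g w| <= c * `|v - w|) -> continuous g.
Proof.
move=> c0 gc v; apply/(@cvgrPdist_lt _ _ _ (nbhs v) (nbhs_filter v)) => e e0.
have ce : 0 < e / (c + 1) by rewrite divr_gt0 // ltr_wpDl.
apply: filterS (nbhsx_ballx v _ ce) => w; rewrite -ball_normE /= => vw.
apply: le_lt_trans (gc v w) _.
rewrite ltr_pdivlMr ?ltr_wpDl // in vw.
have : 0 <= `|v - w| by []; nra.
Qed.

Lemma P_ip_continuous (a : vec) : continuous (P_ip a).
Proof.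
apply: (@lipschitz_continuous_fun _ (\sum_k `|a k 0|)); first exact: sumr_ge0.
by move=> v w; rewrite -P_ipNr -P_ipDr abs_P_ip_le // => k; apply: coord_le_mx_norm.
Qed.

Lemma polyhedral_closed (P : set vec) : P_polyhedral P -> closed P.
Proof.
move=> [m [a [b ->]]].
have -> : [set x : vec | forall j, P_ip (a j) x <= b j] =
    \bigcap_(j in [set: 'I_m]) (P_ip (a j) @^-1` [set r | r <= b j]).
  by rewrite predeqE => x; split => [H j _|H j]; exact: H.
apply: closed_bigI => j _; apply: preimage_closed; last exact: closed_le.
by move=> v _; apply: P_ip_continuous.
Qed.

Lemma P_Fx_closed p (F : 'I_p -> set vec) x : (forall i, closed (F i)) ->
  closed (P_Fx F x).
Proof.
move=> Fc; have -> : P_Fx F x = \bigcap_(i in [set i | F i x]) F i.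
  by rewrite predeqE => y; split => H i Hi; exact: H.
by apply: closed_bigI => i _; apply: Fc.
Qed.

Lemma P_Fx_eq_index p (F : 'I_p -> set vec) x x0 :
  [set i | `[< F i x >]]%SET = [set i | `[< F i x0 >]]%SET -> P_Fx F x = P_Fx F x0.
Proof.
move=> /setP Ieq; rewrite predeqE => y.
have Fx i : F i x <-> F i x0 by apply: asbool_eq_equiv; have := Ieq i; rewrite !inE.
by split => Fy i /Fx; apply: Fy.
Qed.

(* A half-space violated at x stays violated slightly behind x. *)
Lemma polyhedral_near_behind (P : set vec) x d : P_polyhedral P ->
  \forall t \near (0 : R)^'+, P (x - t *: d) -> P x.
Proof.
move=> [m [a [b ->]]] /=.
have [Px|/existsNP[j /negP]] := pselect (forall j, P_ip (a j) x <= b j).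
  by apply: nearW => t _.
rewrite -ltNge -subr_gt0 => bj.
have c1 : 0 < `|P_ip (a j) d| + 1 by rewrite ltr_wpDl.
near=> t => /(_ j); rewrite P_ipDr P_ipNr P_ipZr.
have t0 : 0 < t by near: t; exact: nbhs_right_gt.
have : t * (`|P_ip (a j) d| + 1) < P_ip (a j) x - b j.
  by rewrite -ltr_pdivlMr //; near: t; apply: nbhs_right_lt; rewrite divr_gt0.
have : t * P_ip (a j) d <= t * `|P_ip (a j) d| by rewrite ler_wpM2l ?ler_norm ?ltW.
nra.
Unshelve. all: by end_near.
Qed.

Lemma polyhedra_near_behind p (F : 'I_p -> set vec) x d :
  (forall j, P_polyhedral (F j)) ->
  exists2 t : R, 0 < t <= 1 & forall j, F j (x - t *: d) -> F j x.
Proof.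
move=> Fp.
have Fnear : \forall t \near (0 : R)^'+, forall j, F j (x - t *: d) -> F j x.
  by apply: filter_forall => j; apply: polyhedral_near_behind.
have [t [[t0 t1] Ft]] :=
  filter_ex (filterI (filterI (nbhs_right_gt 0) (nbhs_right_lt ltr01)) Fnear).
by exists t => //; rewrite t0 ltW.
Qed.

End Polyhedra.

Section PiecewiseQuadratic.
Variables (R : realType) (n : nat).
Local Notation vec := 'cV[R]_n.

Definition quad_fun (A : 'M[R]_n) (a : vec) (al : R) (z : vec) : R :=
  1 / 2 * P_ip z (A *m z) + P_ip a z + al.

Lemma quad_funD_scale A a al x d s :
  quad_fun A a al (x + s *: d) = quad_fun A a al x
    + s * (1 / 2 * (P_ip x (A *m d) + P_ip d (A *m x)) + P_ip a d)
    + s ^+ 2 * (1 / 2 * P_ip d (A *m d)).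
Proof. by rewrite /quad_fun mulmxDr -scalemxAr !P_ipDl !P_ipDr !P_ipZl !P_ipZr; ring. Qed.

(* The subgradient inequality at x - t d bounds the linear part of the
   expansion along d by the quadratic one. *)
Lemma P_bregman_le_quad (f : vec -> R) A a al x xs d (t : R) :
  P_subgrad f x xs -> 0 < t <= 1 ->
  f x = quad_fun A a al x -> f (x + d) = quad_fun A a al (x + d) ->
  f (x - t *: d) = quad_fun A a al (x - t *: d) ->
  P_bregman f xs x (x + d) <= `|P_ip d (A *m d)|.
Proof.
move=> sg /andP[t0 t1] fx fy fz.
have := sg (x - t *: d).
rewrite [_ - x]addrAC subrr add0r P_ipNr P_ipZr fx fz.
have -> : x - t *: d = x + (- t) *: d by rewrite scaleNr.
rewrite quad_funD_scale.
rewrite /P_bregman [_ - x]addrC addKr fy fx -[d in quad_fun _ _ _ (x + d)]scale1r.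
rewrite quad_funD_scale.
set B := _ + P_ip a d; set g := P_ip d (A *m d); set I := P_ip xs d.
move=> sgz; have BI : B - I <= t * g / 2.
  by rewrite -(ler_pM2l t0); lra.
have : t * g <= `|g|.
  apply: le_trans (ler_wpM2l (ltW t0) (ler_norm g)) _.
  by rewrite ler_piMl ?normr_ge0.
have := ler_norm g; lra.
Qed.

Definition plq_modulus p (A : 'I_p -> 'M[R]_n) : R :=
  \sum_j \sum_i \sum_k `|A j i k|.

Lemma sum_abs_le_plq_modulus p (A : 'I_p -> 'M[R]_n) j :
  \sum_i \sum_k `|A j i k| <= plq_modulus A.
Proof.
rewrite /plq_modulus (bigD1 j) //= lerDl.
by do 2 (apply: sumr_ge0 => ? _); apply: sumr_ge0.
Qed.

Lemma plq_modulus_ge0 p (A : 'I_p -> 'M[R]_n) : 0 <= plq_modulus A.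
Proof. by do 2 (apply: sumr_ge0 => ? _); apply: sumr_ge0. Qed.

Lemma plq_bregman_le_local (f : vec -> R) p (F : 'I_p -> set vec) A a al x xs y :
  P_plq_rep f F A a al -> P_subgrad f x xs -> P_Fx F x y ->
  P_bregman f xs x y <= plq_modulus A * P_norm2 (y - x) ^+ 2.
Proof.
move=> [Fp [cover [_ fq]]] sg Fxy.
have [t t01 Ft] := polyhedra_near_behind x (y - x) Fp.
have : [set: vec] (x - t *: (y - x)) by [].
rewrite -cover => -[j _ /[dup] /Ft Fjx Fjz].
have Fjy : F j y by apply: Fxy.
have := @P_bregman_le_quad f (A j) (a j) (al j) x xs (y - x) t sg t01.
rewrite addrC subrK => /(_ (fq j x Fjx) (fq j y Fjy) (fq j _ Fjz)) bregman_le.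
apply: le_trans bregman_le _; apply: le_trans (ler_wpM2r (sqr_ge0 _)
  (sum_abs_le_plq_modulus A j)).
apply: abs_P_ip_quad_le; first exact: P_norm2_ge0.
by move=> k; apply: coord_le_P_norm2.
Qed.

Lemma plq_bounded_box (f : vec -> R) p (F : 'I_p -> set vec) A a al (r : R) :
  P_plq_rep f F A a al -> 0 <= r ->
  exists2 B : R, 0 <= B & forall z : vec, (forall k, `|z k 0| <= r) -> `|f z| <= B.
Proof.
move=> [_ [cover [_ fq]]] r0.
pose T i := 1 / 2 * ((\sum_i' \sum_k `|A i i' k|) * r ^+ 2)
  + (\sum_k `|a i k 0|) * r + `|al i|.
have T0 i : 0 <= T i.
  by rewrite /T !addr_ge0 ?mulr_ge0 ?sumr_ge0 // => *; rewrite sumr_ge0.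
exists (\sum_i T i) => [|z zr]; first exact: sumr_ge0.
have : [set: vec] z by [].
rewrite -cover => -[i _ Fiz]; rewrite (fq i z Fiz).
apply: (@le_trans _ _ (T i)); last by rewrite (bigD1 i) //= lerDl sumr_ge0.
rewrite /T (le_trans (ler_normD _ _)) // lerD2r (le_trans (ler_normD _ _)) //.
rewrite lerD ?abs_P_ip_le // normrM ger0_norm ?divr_ge0 // ler_wpM2l ?divr_ge0 //.
exact: abs_P_ip_quad_le.
Qed.

Lemma P_bregman_le_reflection (f : vec -> R) x xs y : P_subgrad f x xs ->
  P_bregman f xs x y <= f y + f (x + (x - y)) - 2 * f x.
Proof.
move=> sg; have := sg (x + (x - y)).
by rewrite addrAC subrr add0r -opprB P_ipNr /P_bregman; lra.
Qed.

End PiecewiseQuadratic.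

Section Distance.
Variables (R : realType) (n : nat).
Local Notation vec := 'cV[R]_n.
Implicit Types (C D K : set vec) (x y c : vec).

Lemma P_edist_le C x c : C c -> P_edist x C <= P_norm2 (x - c).
Proof.
move=> Cc; apply: ge_inf; last by exists c.
by exists 0 => _ [c' _ <-]; apply: P_norm2_ge0.
Qed.

Lemma P_edist_ge C x (del : R) : C !=set0 ->
  (forall c, C c -> del <= P_norm2 (x - c)) -> del <= P_edist x C.
Proof.
move=> [c0 Cc0] H; apply: lb_le_inf; first by exists (P_norm2 (x - c0)), c0.
by move=> _ [c Cc <-]; apply: H.
Qed.

Lemma P_edist_ge0 C x : C !=set0 -> 0 <= P_edist x C.
Proof. by move=> C0; apply: P_edist_ge => // c _; apply: P_norm2_ge0. Qed.

Lemma P_edist_mem C x : C x -> P_edist x C = 0.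
Proof.
move=> Cx; apply/eqP; rewrite eq_le P_edist_ge0 ?andbT; last by exists x.
by have := P_edist_le x Cx; rewrite subrr P_norm2_0.
Qed.

Lemma P_edist_le_subset C D x : D `<=` C -> D !=set0 ->
  P_edist x C <= P_edist x D.
Proof.
move=> DC D0; apply: P_edist_ge => // c Dc.
exact/P_edist_le/DC.
Qed.

Lemma P_edist_adherent C x (e : R) : C !=set0 -> 0 < e ->
  exists2 c, C c & P_norm2 (x - c) < P_edist x C + e.
Proof.
move=> [c0 Cc0] e0.
have Cinf : has_inf [set P_norm2 (x - c) | c in C].
  split; first by exists (P_norm2 (x - c0)), c0.
  by exists 0 => _ [c _ <-]; apply: P_norm2_ge0.
by have [_ [c Cc <-]] := inf_adherent e0 Cinf; exists c.
Qed.

Lemma P_edist_ball_le C x c0 (rad : R) : C c0 -> P_eball_R rad x ->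
  P_edist x C <= \sum_k (rad + `|c0 k 0|).
Proof.
move=> Cc0 xb; apply: le_trans (P_edist_le x Cc0) _.
apply: le_trans (P_norm2_le_sum_coord _) _; apply: ler_sum => k _.
rewrite !mxE (le_trans (ler_normB _ _)) // lerD2r.
exact: le_trans (coord_le_P_norm2 x k) xb.
Qed.

Lemma closed_sep_point C x : closed C -> ~ C x ->
  exists2 r : R, 0 < r & forall c, C c -> r <= `|x - c|.
Proof.
move=> Cc nCx.
have /nbhs_ballP[r r0 rC] : nbhs x (~` C).
  by apply: open_nbhs_nbhs; split => //; apply: closed_openC.
exists r => // c Cc'; rewrite leNgt; apply/negP => xc.
by apply: (rC c) => //; rewrite -ball_normE.
Qed.

Lemma P_edist_gt0 C x : closed C -> C !=set0 -> ~ C x -> 0 < P_edist x C.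
Proof.
move=> Cc C0 /(closed_sep_point Cc)[r r0 Cr].
apply: lt_le_trans r0 (P_edist_ge C0 _) => c Cc'.
exact: le_trans (Cr c Cc') (mx_norm_le_P_norm2 _).
Qed.

(* Distance for the max norm: unlike P_edist it is visibly 1-Lipschitz,
   since the triangle inequality of the norm is available. *)
Definition mx_dist C (v : vec) : R := inf [set `|v - c| | c in C].

Lemma mx_dist_le C v c : C c -> mx_dist C v <= `|v - c|.
Proof. by move=> Cc; apply: ge_inf; [exists 0 => _ [? _ <-] | exists c]. Qed.

Lemma mx_dist_lipschitz C v w : C !=set0 -> mx_dist C v <= `|v - w| + mx_dist C w.
Proof.
move=> [c0 Cc0]; rewrite -lerBlDl.
apply: lb_le_inf => [|_ [c Cc <-]]; first by exists `|w - c0|, c0.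
rewrite lerBlDl (le_trans (mx_dist_le v Cc)) //.
by have := ler_normD (v - w) (w - c); rewrite addrA subrK.
Qed.

Lemma mx_dist_continuous C : C !=set0 -> continuous (mx_dist C).
Proof.
move=> C0; apply: (@lipschitz_continuous_fun _ _ _ 1) => // v w.
rewrite mul1r ler_norml; have := mx_dist_lipschitz v w C0.
have := mx_dist_lipschitz w v C0; rewrite distrC; lra.
Qed.

Lemma trmx_continuous : continuous (fun w : 'rV[R]_n => (w^T : vec)).
Proof.
move=> w B /= [P HP sPB].
exists (fun i j => P j i) => [i j|N HN]; first by have := HP j i; rewrite mxE.
by apply: sPB => i j /=; rewrite mxE; apply: HN.
Qed.

Definition coord_box (rad : R) : set vec :=
  [set w^T | w in [set w : 'rV[R]_n | forall i, `[- rad, rad]%classic (w ord0 i)]].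

Lemma coord_box_compact (rad : R) : compact (coord_box rad).
Proof.
apply: continuous_compact; first exact: continuous_subspaceT trmx_continuous.
exact: (@rV_compact R n (fun _ => `[- rad, rad]%classic) (fun _ => @segment_compact R _ _)).
Qed.

Lemma P_eball_sub_coord_box (rad : R) : P_eball_R rad `<=` coord_box rad.
Proof.
move=> x xb; exists x^T; last by rewrite trmxK.
move=> i /=; rewrite mxE in_itv /= -ler_norml.
by apply: le_trans xb; rewrite [ord0]ord1; apply: coord_le_P_norm2.
Qed.

(* mx_dist C is continuous, hence has a positive minimum on the compact set
   coord_box rad `&` K, and it is dominated by P_edist. *)
Lemma P_edist_sep K C (rad : R) : closed K -> closed C -> C !=set0 ->
  (forall x, K x -> ~ C x) ->
  exists2 del : R, 0 < del & forall x, K x -> P_eball_R rad x -> del <= P_edist x C.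
Proof.
move=> Kc Cc C0 KC.
have [[z [bz Kz]]|KB0] := pselect ((coord_box rad `&` K) !=set0); last first.
  exists 1 => // x Kx /P_eball_sub_coord_box xb.
  by exfalso; apply: KB0; exists x.
have [cs /set_mem[_ Kcs] csmin] := compact_EVT_min (ex_intro _ z (conj bz Kz))
  (compact_closedI (@coord_box_compact rad) Kc)
  (continuous_subspaceT (mx_dist_continuous C0)).
have [r r0 Cr] := closed_sep_point Cc (KC cs Kcs).
exists (mx_dist C cs) => [|x Kx xb].
  apply: lt_le_trans r0 _; have [c0 Cc0] := C0.
  by apply: lb_le_inf => [|_ [c Cc' <-]]; [exists `|cs - c0|, c0 | apply: Cr].
apply: P_edist_ge => // c Cc'.
apply: le_trans (csmin x _) _; first by apply/mem_set; split => //; apply: P_eball_sub_coord_box.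
exact: le_trans (mx_dist_le x Cc') (mx_norm_le_P_norm2 _).
Qed.

End Distance.

Section BregmanDistance.
Variables (R : realType) (n : nat).
Local Notation vec := 'cV[R]_n.
Implicit Types (f : vec -> R) (C K X : set vec) (x xs y : vec).

Lemma P_bregman_dist2_le f C x xs y : P_subgrad f x xs -> C y ->
  P_bregman_dist2 f xs x C <= P_bregman f xs x y.
Proof.
move=> sg Cy; apply: ge_inf; last by exists y.
by exists 0 => _ [z _ <-]; have := sg z; rewrite /P_bregman; lra.
Qed.

Lemma P_bregman_self f x xs : P_bregman f xs x x = 0.
Proof. by rewrite /P_bregman !subrr P_ip0r subr0. Qed.

Lemma bdd_lin_regular_pair K C : P_bdd_lin_regular (P_pair_sets K C) ->
  K `&` C !=set0 /\ forall rad : R, 0 < rad -> exists2 g : R, 0 < g &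
    forall x, P_eball_R rad x ->
      P_edist x (K `&` C) ^+ 2 <= g * (P_edist x K ^+ 2 + P_edist x C ^+ 2).
Proof.
move=> [_ [KC0 reg]].
have capE : \bigcap_(i in [set: 'I_2]) P_pair_sets K C i = K `&` C.
  rewrite predeqE => z; split => [KCz|[Kz Cz] i _]; last by rewrite /P_pair_sets; case: ifP.
  by split; [apply: (KCz ord0) | apply: (KCz ord_max)].
rewrite capE in KC0 reg; split => // rad /reg[g g0 Hg]; exists g => // x /Hg.
by rewrite !big_ord_recr big_ord0 /= add0r.
Qed.

Lemma bregman_dist2_regular f X K C (M rad : R) :
  0 <= M -> 0 < rad -> X `<=` K -> closed C ->
  P_bdd_lin_regular (P_pair_sets K C) ->
  (forall x xs y, X x -> P_subgrad f x xs -> K y ->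
    P_bregman f xs x y <= M * P_norm2 (y - x) ^+ 2) ->
  exists2 L : R, 0 < L & forall x xs, X x -> P_eball_R rad x -> P_subgrad f x xs ->
    P_bregman_dist2 f xs x C <= L * P_edist x C ^+ 2.
Proof.
move=> M0 rad0 XK Cc /bdd_lin_regular_pair[KC0 /(_ rad rad0)[g g0 reg]] local.
have C0 : C !=set0 by have [z [_ Cz]] := KC0; exists z.
have Mg0 : 0 <= 4 * M * g by rewrite !mulr_ge0 // ltW.
exists (4 * M * g + 1) => [|x xs Xx xb sg]; first lra.
have [Cx|nCx] := pselect (C x).
  apply: le_trans (P_bregman_dist2_le sg Cx) _.
  by rewrite P_bregman_self mulr_ge0 ?sqr_ge0 //; lra.
have dC0 := P_edist_gt0 Cc C0 nCx.
have dCKC : P_edist x C <= P_edist x (K `&` C).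
  by apply: P_edist_le_subset => // z [].
have [y [Ky Cy] xy] := P_edist_adherent x KC0 (lt_le_trans dC0 dCKC).
have := reg x xb; rewrite (P_edist_mem (XK _ Xx)) expr0n add0r => dKC.
apply: le_trans (P_bregman_dist2_le sg Cy) _.
apply: le_trans (local x xs y Xx sg Ky) _.
rewrite -P_norm2N opprB.
set e := P_edist x (K `&` C) in dCKC xy dKC *.
have xy4 : P_norm2 (x - y) ^+ 2 <= 4 * e ^+ 2.
  by have := P_norm2_ge0 (x - y); nra.
have := sqr_ge0 (P_edist x C).
have := ler_wpM2l M0 xy4; have := ler_wpM2l M0 dKC; nra.
Qed.

Lemma bregman_dist2_separated f K C (rad : R) :
  0 < rad -> closed K -> closed C -> C !=set0 -> (forall x, K x -> ~ C x) ->
  (forall r : R, 0 <= r -> exists2 B : R, 0 <= B &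
    forall z : vec, (forall k, `|z k 0| <= r) -> `|f z| <= B) ->
  exists2 L : R, 0 < L & forall x xs, K x -> P_eball_R rad x -> P_subgrad f x xs ->
    P_bregman_dist2 f xs x C <= L * P_edist x C ^+ 2.
Proof.
move=> rad0 Kc Cc C0 KC fbdd.
have [del del0 sep] := P_edist_sep rad Kc Cc C0 KC.
have [c0 Cc0] := C0.
set M0 := \sum_k (rad + `|c0 k 0|).
have M00 : 0 <= M0 by apply: sumr_ge0 => k _; have := normr_ge0 (c0 k 0); lra.
have [B B0 fB] := fbdd (rad + 2 * M0) ltac:(lra).
exists ((4 * B + 1) / del ^+ 2) => [|x xs Kx xb sg]; first by rewrite divr_gt0 ?exprn_gt0 //; lra.
have dxC := sep x Kx xb.
have dM0 : P_edist x C <= M0 := P_edist_ball_le Cc0 xb.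
have [y Cy xy] := P_edist_adherent x C0 (lt_le_trans del0 dxC).
have xk k : `|x k 0| <= rad by apply: le_trans (coord_le_P_norm2 x k) xb.
have xyk k : `|x k 0 - y k 0| <= 2 * M0.
  by have := coord_le_P_norm2 (x - y) k; rewrite !mxE; lra.
have fx : `|f x| <= B by apply: fB => k; have := xk k; lra.
have fy : `|f y| <= B.
  apply: fB => k; rewrite -[y k 0](subKr (x k 0)).
  by rewrite (le_trans (ler_normB _ _)) // lerD.
have fz : `|f (x + (x - y))| <= B.
  by apply: fB => k; rewrite !mxE (le_trans (ler_normD _ _)) // lerD.
apply: le_trans (P_bregman_dist2_le sg Cy) _.
apply: le_trans (P_bregman_le_reflection y sg) _.
rewrite mulrAC ler_pdivlMr ?exprn_gt0 //.
have : del ^+ 2 <= P_edist x C ^+ 2 by nra.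
have := ler_norm (f y); have := ler_norm (f (x + (x - y))).
have := ler_norm (- f x); rewrite normrN; have := exprn_gt0 2 del0; nra.
Qed.

End BregmanDistance.

Lemma finite_uniform_bound (R : realFieldType) (T : finType) (P : T -> R -> Prop) :
  (forall t L L', L <= L' -> P t L -> P t L') ->
  (forall t, exists2 L, 0 < L & P t L) -> exists2 L, 0 < L & forall t, P t L.
Proof.
move=> Pmono HP.
have /choice[L HL] : forall t, exists L : R, 0 < L /\ P t L.
  by move=> t; have [L L0 PL] := HP t; exists L.
have L0 t : 0 <= L t by apply: ltW; case: (HL t).
exists (1 + \sum_t L t) => [|t]; first by rewrite ltr_pwDl // sumr_ge0.
apply: Pmono (HL t).2; rewrite (bigD1 t) //= addrCA lerDl addr_ge0 //.
exact: sumr_ge0.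
Qed.

Theorem theorem3p5 (R : realType) (n p : nat) (f : 'cV[R]_n -> R)
  (F : 'I_p -> set 'cV[R]_n) (A : 'I_p -> 'M[R]_n) (a : 'I_p -> 'cV[R]_n)
  (al : 'I_p -> R) (C : set 'cV[R]_n) :
  P_convex_fun f -> P_strongly_convex f -> P_plq_rep f F A a al ->
  C !=set0 -> closed C -> P_convex_set C ->
  (forall x, P_Fx F x `&` C !=set0 -> P_bdd_lin_regular (P_pair_sets (P_Fx F x) C)) ->
  forall rad : R, 0 < rad -> exists2 L : R, 0 < L &
    forall x xs, P_eball_R rad x -> P_subgrad f x xs ->
      P_bregman_dist2 f xs x C <= L * P_edist x C ^+ 2.
Proof.
move=> _ _ plq C0 Cc _ reg rad rad0.
pose I x := [set i | `[< F i x >]]%SET.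
pose bound_on S L := forall x xs, I x = S -> P_eball_R rad x -> P_subgrad f x xs ->
  P_bregman_dist2 f xs x C <= L * P_edist x C ^+ 2.
suff [L L0 HL] : exists2 L : R, 0 < L & forall S, bound_on S L.
  by exists L => // x xs; apply: HL.
apply: finite_uniform_bound => [S L L' LL' HL x xs IS xb sg|S].
  exact: le_trans (HL x xs IS xb sg) (ler_wpM2r (sqr_ge0 _) LL').
have [[x0 <-]|noS] := pselect (exists x0, I x0 = S); last first.
  by exists 1 => // x xs IS; case: noS; exists x.
have XK x : I x = I x0 -> P_Fx F x0 x by move/P_Fx_eq_index <-.
have Kc : closed (P_Fx F x0).
  by apply: P_Fx_closed => i; apply: polyhedral_closed; case: plq.
rewrite /bound_on; have [KC|KC] := pselect (P_Fx F x0 `&` C !=set0).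
  apply: (@bregman_dist2_regular _ _ _ (fun x => I x = I x0))
    (plq_modulus_ge0 A) rad0 XK Cc (reg x0 KC) _.
  move=> x xs y /P_Fx_eq_index Fx_eq sg; rewrite -Fx_eq.
  exact: plq_bregman_le_local plq sg.
have [L L0 HL] := bregman_dist2_separated rad0 Kc Cc C0
  (fun x Kx Cx => KC (ex_intro _ x (conj Kx Cx))) (fun r => plq_bounded_box plq).
by exists L => // x xs /XK; apply: HL.
Qed.
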